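(* Consider the following sequence of multiple testing problems indexed by the dimension $n$. Let $f(\cdot\mid\theta)$, $\theta\in\mathbb{R}$, be a parametric family of densities, let $\theta_0\neq\theta_1$, and let $m\ge1$ be an integer. There is an unknown support set $\mathcal{S}=\mathcal{S}(n)\subseteq\{1,\dots,n\}$ with $s=|\mathcal{S}|$. Run the following sequential thresholding procedure with $K$ passes. Set $\mathcal{S}_0=\{1,\dots,n\}$ and $\gamma_0=\mathrm{median}(T_{i,m}\mid\theta_0)$, the median of the distribution of $T_{i,m}=\sum_{j=1}^m\log\frac{f(y_{i,j}\mid\theta_1)}{f(y_{i,j}\mid\theta_0)}$ when the $y_{i,j}$ are i.i.d. $f(\cdot\mid\theta_0)$. For $k=1,\dots,K$: for each $i\in\mathcal{S}_{k-1}$ draw fresh observations $y^{(k)}_{i,1},\dots,y^{(k)}_{i,m}$, independent of everything else, i.i.d. $f(\cdot\mid\theta_0)$ if $i\notin\mathcal{S}$ and i.i.d. $f(\cdot\mid\theta_1)$ if $i\in\mathcal{S}$, compute $T^{(k)}_{i,m}=\sum_{j=1}^m\log\frac{f(y^{(k)}_{i,j}\mid\theta_1)}{f(y^{(k)}_{i,j}\mid\theta_0)}$, and set $\mathcal{S}_k=\{i\in\mathcal{S}_{k-1}: T^{(k)}_{i,m}>\gamma_0\}$. The output is $\mathcal{S}_K$. (For the purpose of the condition below, $T^{(k)}_{i,m}$ is regarded as defined for all $i\in\mathcal{S}$ and all $k\le K$.) Suppose that $$\lim_{n\to\infty}\mathbb{P}\Big(\min_{1\le k\le K}\ \min_{i\in\mathcal{S}}T^{(k)}_{i,m}\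 \le\ \mathrm{median}(T_{i,m}\mid\theta_0)\Big)=0$$ and $K=(1+\epsilon)\log_2 n$ for some $\epsilon>0$. Then sequential thresholding is reliable: with $\mathcal{E}_\epsilon=\{\mathcal{S}_K\neq\mathcal{S}\}$, $\lim_{n\to\infty}\mathbb{P}(\mathcal{E}_\epsilon)=0$.
   Context: A support estimator $\widehat{\mathcal{S}}(n)$ is called reliable if $\lim_{n\to\infty}\mathbb{P}(\widehat{\mathcal{S}}(n)\neq\mathcal{S}(n))=0$. The quantities $s$, $\theta_0,\theta_1$ may depend on $n$. *)

From HB Require Import structures.
From mathcomp Require Import all_boot all_order all_algebra.
From mathcomp Require Import all_classical all_reals all_analysis.
Set Implicit Arguments. Unset Strict Implicit. Unset Printing Implicit Defensive.
Import Order.TTheory GRing.Theory Num.Theory.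
Import numFieldNormedType.Exports.
Local Open Scope classical_set_scope.
Local Open Scope ring_scope.

Definition mutually_independent (R : realType) (d : measure_display)
  (Omega : measurableType d) (P : probability Omega R) (I : eqType)
  (D : set I) (X : I -> Omega -> R) : Prop :=
  forall (J : seq I), uniq J -> (forall i, i \in J -> D i) ->
  forall B : I -> set R, (forall i, measurable (B i)) ->
  P (\bigcap_(i in [set i | i \in J]) (X i @^-1` B i)) =
  \big[*%E/1%E]_(i <- J) P (X i @^-1` B i).

Definition has_density (R : realType) (d : measure_display)
  (Omega : measurableType d) (P : probability Omega R)
  (Y : Omega -> R) (g : R -> R) : Prop :=
  forall A : set R, measurable A ->
    P (Y @^-1` A) = (\int[lebesgue_measure]_(x in A) (g x)%:E)%E.

Definition density_family (R : realType) (f : R -> R -> R) : Prop :=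
  forall theta : R, (forall x, 0 <= f theta x) /\
    measurable_fun setT (f theta) /\
    (\int[lebesgue_measure]_(x in setT) (f theta x)%:E = 1)%E.

Definition llr (R : realType) (f : R -> R -> R) (theta0 theta1 y : R) : R :=
  ln (f theta1 y / f theta0 y).

(* gamma is a median of the law of T_m = sum_{j<m} llr(Y_j) when
   Y_1..Y_m are i.i.d. with density f(.|θ0).  Since this law depends only on
   (f, θ0, θ1, m), it is expressed by quantifying over every probability space
   carrying such an i.i.d. sample. *)
Definition is_median_llr (R : realType) (f : R -> R -> R)
  (theta0 theta1 : R) (m : nat) (gamma : R) : Prop :=
  forall (d : measure_display) (Omega : measurableType d)
    (Q : probability Omega R) (Y : 'I_m -> Omega -> R),
    (forall j, measurable_fun setT (Y j)) ->
    mutually_independent Q setT Y ->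
    (forall j, has_density Q (Y j) (f theta0)) ->
    ((2^-1)%:E <= Q [set w | (\sum_(j < m) llr f theta0 theta1 (Y j w) <= gamma)%R])%E /\
    ((2^-1)%:E <= Q [set w | (gamma <= \sum_(j < m) llr f theta0 theta1 (Y j w))%R])%E.

(* Sequential thresholding: S_0 = {1..n},
   S_{k+1} = {i in S_k | T^{(k+1)}_i > gamma}, where T k i is the statistic
   of pass k+1 (passes indexed from 0). *)
Fixpoint seq_thresh (n : nat) (R : realType) (T : nat -> 'I_n -> R)
  (gamma : R) (k : nat) : {set 'I_n} :=
  match k with
  | 0 => [set: 'I_n]%SET
  | k'.+1 => [set i in seq_thresh T gamma k' | gamma < T k' i]%SET
  end.

From HB Require Import structures.
From mathcomp Require Import all_boot all_order all_algebra.
From mathcomp Require Import all_classical all_reals all_analysis.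
From mathcomp Require Import lra.
Import Order.TTheory GRing.Theory Num.Theory.
Import numFieldNormedType.Exports.
Local Open Scope classical_set_scope.
Local Open Scope ring_scope.

(* The output differs from S only if some i in S falls below the threshold in
   some pass, which has vanishing probability by hypothesis, or some i outside
   S survives all K passes.  A null statistic exceeds its median gamma with
   probability at most 1/2 and the passes use independent observations, so a
   null index survives with probability at most 2^-K; a union bound over the
   nulls gives n 2^-K <= n^-eps -> 0.  The pass events {T^(k)_i > gamma} are
   not products of events about single observations, so their independence is
   derived from that of the observations by a pi-lambda argument on the
   sigma-algebras generated by the boxes of each pass. *)

Lemma independent_sigma_of_pi_system {R : realType} {d : measure_display}
  {Omega : measurableType d} (P : probability Omega R)
  (G : set (set Omega)) (E : set Omega) :
  measurable E -> G setT -> setI_closed G -> G `<=` measurable ->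
  (forall C, G C -> P (C `&` E) = (P C * P E)%E) ->
  forall C, <<s G >> C -> P (C `&` E) = (P C * P E)%E.
Proof.
move=> mE GT GI Gm GE C GC.
have PE_ge0 : (0 <= fine (P E))%R by apply/fine_ge0/measure_ge0.
pose mu1 := mrestr P mE.
pose mu2 := mscale (NngNum PE_ge0) P.
have mu2E A : mu2 A = (P A * P E)%E.
  by rewrite /mu2 /mscale /= fineK ?fin_num_measure // muleC.
have -> : P (C `&` E) = mu1 C by [].
rewrite -mu2E.
apply: (@g_sigma_algebra_measure_unique _ _ _ G Gm (fun=> setT) (fun=> GT)
  (bigcup_const _ _) mu1 mu2) => //.
- by move=> C' /GE; rewrite -mu2E.
- have mTE := measurableI _ _ measurableT mE.
  by move=> _; apply: (le_lt_trans (probability_le1 P mTE)); exact: ltry.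
Qed.

Section block_independence.
Context {R : realType} {d : measure_display} {Omega : measurableType d}
  (P : probability Omega R) {I : eqType} (D : set I) (X : I -> Omega -> R).
Hypothesis mX : forall i, measurable_fun setT (X i).
Hypothesis indX : mutually_independent P D X.

Definition box (J : seq I) (B : I -> set R) : set Omega :=
  \bigcap_(i in [set i | i \in J]) (X i @^-1` B i).

Lemma box_nil B : box [::] B = setT.
Proof. by apply/seteqP; split. Qed.

Lemma box_cons a J B : box (a :: J) B = X a @^-1` B a `&` box J B.
Proof.
apply/seteqP; split => w /=.
- move=> Xw; split; first by apply: Xw; rewrite /= mem_head.
  by move=> i iJ; apply: Xw; rewrite /= inE iJ orbT.
- by move=> [Xaw Xw] i; rewrite /= inE => /orP[/eqP->|/Xw].
Qed.

Lemma box_cat J1 J2 B : box (J1 ++ J2) B = box J1 B `&` box J2 B.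
Proof.
elim: J1 => [|a J1 IH] /=; first by rewrite box_nil setTI.
by rewrite !box_cons IH setIA.
Qed.

Lemma eq_box J B1 B2 : {in J, B1 =1 B2} -> box J B1 = box J B2.
Proof.
move=> eqB; apply/seteqP; split => w Bw i iJ; have := Bw i iJ.
all: by rewrite /= eqB.
Qed.

Lemma measurable_box J B : (forall i, measurable (B i)) -> measurable (box J B).
Proof.
move=> mB; elim: J => [|a J IH]; first by rewrite box_nil.
rewrite box_cons; apply: measurableI => //.
by rewrite -[_ @^-1` _]setTI; apply: mX.
Qed.

Lemma probability_box J B : uniq J -> (forall i, i \in J -> D i) ->
  (forall i, measurable (B i)) ->
  P (box J B) = \big[*%E/1%E]_(i <- J) P (X i @^-1` B i).
Proof. by move=> uJ JD mB; exact: indX. Qed.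

Definition box_system (J : seq I) : set (set Omega) :=
  [set C | exists2 B : I -> set R, (forall i, measurable (B i)) & C = box J B].

Lemma box_systemT J : box_system J setT.
Proof. by exists (fun=> setT) => //; apply/seteqP; split. Qed.

Lemma box_system_setI_closed J : setI_closed (box_system J).
Proof.
move=> _ _ [B1 mB1 ->] [B2 mB2 ->].
exists (fun i => B1 i `&` B2 i); first by move=> i; apply: measurableI.
apply/seteqP; split => w /=.
- by move=> [B1w B2w] i iJ; split; [exact: B1w|exact: B2w].
- by move=> Bw; split => i iJ; have [] := Bw i iJ.
Qed.

Lemma box_system_measurable J : box_system J `<=` measurable.
Proof. by move=> _ [B mB ->]; exact: measurable_box. Qed.

Lemma sigma_box_system_measurable J : <<s box_system J >> `<=` measurable.
Proof.
exact: smallest_sub (@sigma_algebra_measurable _ Omega)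
  (@box_system_measurable J).
Qed.

Lemma measurable_fun_box_system J i : i \in J ->
  measurable_fun (T := g_sigma_algebraType (box_system J)) setT (X i).
Proof.
move=> iJ _ Y mY; rewrite setTI; apply: sub_sigma_algebra.
exists (fun x => if x == i then Y else setT); first by move=> x; case: ifP.
apply/seteqP; split => w /=.
- by move=> Yw x _; case: eqP => [->|].
- by move=> Bw; have := Bw i iJ; rewrite eqxx.
Qed.

Variable J : nat -> seq I.
Hypothesis J_uniq : forall k, uniq (J k).
Hypothesis J_sub : forall k i, i \in J k -> D i.
Hypothesis J_disjoint : forall k k' i, k != k' -> i \in J k -> i \notin J k'.

(* Induction on the blocks: for the first block the identity is a statement
   about its event that holds on boxes (by the induction hypothesis with the
   block added to [L]) and hence on their sigma-algebra. *)
Lemma independent_blocks_box (ks : seq nat) (A : nat -> set Omega) :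
  uniq ks -> (forall k, k \in ks -> <<s box_system (J k) >> (A k)) ->
  forall (L : seq I) (B : I -> set R), uniq L -> (forall i, i \in L -> D i) ->
  (forall k i, k \in ks -> i \in L -> i \notin J k) ->
  (forall i, measurable (B i)) ->
  P (\big[setI/setT]_(k <- ks) A k `&` box L B) =
  (\big[*%E/1%E]_(k <- ks) P (A k) * P (box L B))%E.
Proof.
elim: ks A => [|k0 ks IH] A; first by move=> *; rewrite !big_nil setTI mul1e.
move=> /= /andP[k0_notin ks_uniq] sA L B L_uniq L_sub L_disj mB.
have sA' k : k \in ks -> <<s box_system (J k) >> (A k).
  by move=> kks; apply: sA; rewrite inE kks orbT.
have L_disj' k i : k \in ks -> i \in L -> i \notin J k.
  by move=> kks; apply: L_disj; rewrite inE kks orbT.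
rewrite !big_cons -setIA.
set E := \big[setI/setT]_(k <- ks) A k `&` box L B.
have mE : measurable E.
  apply: measurableI; last exact: measurable_box.
  rewrite big_seq; apply: bigsetI_measurable => k kks.
  exact: sigma_box_system_measurable (sA' k kks).
have box_case C : box_system (J k0) C -> P (C `&` E) = (P C * P E)%E.
  move=> [B' mB' ->].
  pose B'' i := if i \in J k0 then B' i else B i.
  have mB'' i : measurable (B'' i) by rewrite /B''; case: ifP.
  have L_disj0 i : i \in L -> i \notin J k0 by apply: L_disj; exact: mem_head.
  have eqJ : box (J k0) B' = box (J k0) B''.
    by apply: eq_box => i iJ; rewrite /B'' iJ.
  have eqL : box L B = box L B''.
    by apply: eq_box => i iL; rewrite /B'' (negbTE (L_disj0 i iL)).
  have JL_uniq : uniq (J k0 ++ L).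
    by rewrite cat_uniq J_uniq L_uniq andbT; apply/hasPn => i /L_disj0.
  have JL_sub i : i \in J k0 ++ L -> D i.
    by rewrite mem_cat => /orP[/J_sub|/L_sub].
  have JL_disj k i : k \in ks -> i \in J k0 ++ L -> i \notin J k.
    move=> kks; rewrite mem_cat => /orP[iJ|]; last exact: L_disj'.
    by apply: J_disjoint iJ; apply: contraNneq k0_notin => ->.
  have P_JL :
      P (box (J k0 ++ L) B'') = (P (box (J k0) B'') * P (box L B''))%E.
    by rewrite !probability_box // ?big_cat // => i /J_sub.
  by rewrite /E eqL eqJ setICA -box_cat IH // IH // P_JL muleCA.
rewrite (independent_sigma_of_pi_system P _ _ mE (box_systemT _)
  (@box_system_setI_closed _) (@box_system_measurable _) box_case); last first.
  by apply: sA; exact: mem_head.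
by rewrite IH // muleA.
Qed.

Lemma independent_blocks (ks : seq nat) (A : nat -> set Omega) :
  uniq ks -> (forall k, k \in ks -> <<s box_system (J k) >> (A k)) ->
  P (\big[setI/setT]_(k <- ks) A k) = \big[*%E/1%E]_(k <- ks) P (A k).
Proof.
move=> ks_uniq sA.
have := independent_blocks_box _ _ ks_uniq sA [::] (fun=> setT) erefl.
by rewrite box_nil setIT probability_setT mule1; apply.
Qed.

End block_independence.

Lemma mutually_independent_comp {R : realType} {d : measure_display}
  {Omega : measurableType d} (P : probability Omega R) {I I' : eqType}
  (D : set I) (X : I -> Omega -> R) (h : I' -> I) (h' : I -> I') :
  cancel h h' -> (forall i, D (h i)) -> mutually_independent P D X ->
  mutually_independent P setT (X \o h).
Proof.
move=> hK hD indX J J_uniq _ B mB.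
have -> : \big[*%E/1%E]_(j <- J) P ((X \o h) j @^-1` B j) =
    \big[*%E/1%E]_(i <- [seq h j | j <- J]) P (X i @^-1` B (h' i)).
  by rewrite big_map; apply: eq_bigr => j _; rewrite /= hK.
rewrite -indX //.
- congr (P _); apply/seteqP; split => w /= Xw.
  + by move=> _ /mapP[j jJ ->]; rewrite /= hK; exact: Xw.
  + by move=> j jJ; have := Xw (h j) (map_f h jJ); rewrite /= hK.
- by rewrite map_inj_uniq //; exact: can_inj hK.
- by move=> _ /mapP[j _ ->].
Qed.

Lemma measurable_gtr_set {d : measure_display} {T : measurableType d}
  {R : realType} (h : T -> R) (g : R) :
  measurable_fun setT h -> measurable [set w | g < h w].
Proof.
by move=> mh; rewrite -preimage_itvoy -[_ @^-1` _]setTI; exact: mh.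
Qed.

Lemma measurable_ler_set {d : measure_display} {T : measurableType d}
  {R : realType} (h : T -> R) (g : R) :
  measurable_fun setT h -> measurable [set w | h w <= g].
Proof.
by move=> mh; rewrite -preimage_itvNyc -[_ @^-1` _]setTI; exact: mh.
Qed.

Lemma measurable_llr {R : realType} (f : R -> R -> R) (theta0 theta1 : R) :
  density_family f -> measurable_fun setT (llr f theta0 theta1).
Proof.
move=> f_density.
have [f0_ge0 _] := f_density theta0.
have mf0 : measurable_fun setT (f theta0) by have [_ []] := f_density theta0.
have mf1 : measurable_fun setT (f theta1) by have [_ []] := f_density theta1.
have -> : llr f theta0 theta1 = fun y => ln (f theta1 y * f theta0 y `^ (-1)).
  by apply/funext => y; rewrite /llr powR_inv1.
have mf0V : measurable_fun setT (fun y => f theta0 y `^ (-1)).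
  exact: measurableT_comp (measurable_realfun.measurable_powR (-1)) mf0.
apply: measurableT_comp; first exact: measurable_realfun.measurable_ln.
exact: measurable_realfun.measurable_funM mf1 mf0V.
Qed.

Lemma measurable_llr_sum {R : realType} (f : R -> R -> R) (theta0 theta1 : R)
  (m : nat) {d : measure_display} {T : measurableType d} (Y : 'I_m -> T -> R) :
  density_family f -> (forall j, measurable_fun setT (Y j)) ->
  measurable_fun setT (fun w => \sum_(j < m) llr f theta0 theta1 (Y j w)).
Proof.
move=> f_density mY; apply: measurable_sum => j.
exact: measurableT_comp (measurable_llr f theta0 theta1 f_density) (mY j).
Qed.

Lemma mem_seq_thresh {R : realType} {n : nat} (T : nat -> 'I_n -> R) (g : R)
    (k : nat) (i : 'I_n) :
  (i \in seq_thresh T g k) = [forall k' : 'I_k, g < T k' i].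
Proof.
elim: k => [|k IH] /=; first by rewrite inE; apply/esym/forallP => -[].
rewrite inE IH; apply/andP/forallP.
- move=> [/forallP Tgt Tkgt] k'; have [k'k|] := ltnP k' k.
    exact: (Tgt (Ordinal k'k)).
  move=> kk'; suff -> : nat_of_ord k' = k by [].
  by apply/eqP; rewrite eqn_leq kk' andbT -ltnS ltn_ord.
- move=> Tgt; split; last exact: (Tgt ord_max).
  by apply/forallP => k'; exact: (Tgt (widen_ord _ k')).
Qed.

Lemma seq_thresh_neqP {R : realType} {n : nat} (T : nat -> 'I_n -> R) (g : R)
    (K : nat) (S : {set 'I_n}) :
  seq_thresh T g K != S <->
  (exists k, (k < K)%N /\ exists2 i, i \in S & T k i <= g) \/
  (exists2 i, i \notin S & forall k, (k < K)%N -> g < T k i).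
Proof.
split.
- move=> /eqP neqS; apply: contra_notP neqS => /not_orP[noE1 noE2].
  apply/setP => i; rewrite mem_seq_thresh; have [iS|iNS] := boolP (i \in S).
    apply/forallP => k; rewrite ltNge; apply/negP => Tle.
    by apply: noE1; exists k; split => //; exists i.
  apply/negP => /forallP Tgt; apply: noE2; exists i => // k kK.
  exact: (Tgt (Ordinal kK)).
- case=> [[k [kK [i iS Tle]]]|[i iNS Tgt]]; apply/eqP => eqS.
    move: iS; rewrite -eqS mem_seq_thresh => /forallP/(_ (Ordinal kK)).
    by rewrite ltNge Tle.
  have : i \in seq_thresh T g K.
    by rewrite mem_seq_thresh; apply/forallP => k; exact: Tgt.
  by rewrite eqS (negbTE iNS).
Qed.

Lemma measure_bigsetU_le {d : measure_display} {T : measurableType d}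
  {R : realType} (mu : {measure set T -> \bar R}) {I : Type} (s : seq I)
  (p : pred I) (F : I -> set T) (c : R) : 0 <= c ->
  (forall i, p i -> measurable (F i) /\ (mu (F i) <= c%:E)%E) ->
  (mu (\big[setU/set0]_(i <- s | p i) F i) <= ((size s)%:R * c)%:E)%E.
Proof.
move=> c_ge0 muF; elim: s => [|a s IH]; first by rewrite big_nil measure0 mul0r.
rewrite big_cons /= -[(size s).+1]addn1 natrD mulrDl mul1r EFinD.
case: ifP => pa; last by apply: le_trans IH _; rewrite leeDl // lee_fin.
have [mFa muFa] := muF a pa.
apply: le_trans (measureU2 _ mFa _) _.
  by apply: bigsetU_measurable => i /muF[].
by rewrite addeC; exact: leeD.
Qed.

Lemma prode_le_exprn {R : realType} {I : eqType} (s : seq I) (a : I -> \bar R)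
  (c : R) : 0 <= c -> (forall i, i \in s -> (0 <= a i <= c%:E)%E) ->
  (\big[*%E/1%E]_(i <- s) a i <= (c ^+ size s)%:E)%E.
Proof.
move=> c_ge0; elim: s => [|i s IH] a_bnd; first by rewrite big_nil expr0.
have /andP[ai_ge0 ai_le] := a_bnd i (mem_head _ _).
have a_bnd' j : j \in s -> (0 <= a j <= c%:E)%E.
  by move=> js; apply: a_bnd; rewrite inE js orbT.
rewrite big_cons /= exprS EFinM; apply: lee_pmul => //; last exact: IH.
by rewrite big_seq; apply: prode_ge0 => j /a_bnd'/andP[].
Qed.

Section sequential_thresholding.
Context {R : realType} (f : R -> R -> R) (m : nat) (theta0 theta1 : R) (n : nat)
  (S : {set 'I_n}) (K : nat) (gamma : R) {d : measure_display}
  {Omega : measurableType d} (P : probability Omega R)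
  (y : nat -> 'I_n -> 'I_m -> Omega -> R).
Hypothesis f_density : density_family f.
Hypothesis gamma_median : is_median_llr f theta0 theta1 m gamma.
Hypothesis my : forall k i j, measurable_fun setT (y k i j).
Hypothesis y_indep : mutually_independent P
  [set kij : nat * 'I_n * 'I_m | (kij.1.1 < K)%N]
  (fun kij => y kij.1.1 kij.1.2 kij.2).
Hypothesis y_density : forall k i j, (k < K)%N ->
  has_density P (y k i j) (f (if i \in S then theta1 else theta0)).

Let T k i w := \sum_(j < m) llr f theta0 theta1 (y k i j w).

Lemma measurable_T k i : measurable_fun setT (T k i).
Proof. exact: measurable_llr_sum. Qed.

Lemma null_pass_le_half k i : (k < K)%N -> i \notin S ->
  (P [set w | (gamma < T k i w)%R] <= (2^-1)%:E)%E.
Proof.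
move=> kK iNS.
have indep_i : mutually_independent P setT (fun j => y k i j).
  exact: (mutually_independent_comp P _ _ (fun j => (k, i, j)) snd
    (fun=> erefl) (fun=> kK) y_indep).
have density_i j : has_density P (y k i j) (f theta0).
  by have := y_density k i j kK; rewrite (negbTE iNS).
have [median_le _] := gamma_median _ _ _ _ (my k i) indep_i density_i.
have mle : measurable [set w | T k i w <= gamma].
  exact: measurable_ler_set (measurable_T k i).
have -> : [set w | gamma < T k i w] = ~` [set w | T k i w <= gamma].
  by apply/seteqP; split => w /=; rewrite ltNge => /negP.
rewrite probability_setC //.
move: median_le; rewrite -(fineK (fin_num_measure P _ mle)) -EFinB !lee_fin.
lra.
Qed.

Lemma null_survival_le i : i \notin S ->
  (P (\big[setI/setT]_(k <- iota 0 K) [set w | (gamma < T k i w)%R]) <=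
   ((2^-1) ^+ K)%:E)%E.
Proof.
move=> iNS.
pose X (kij : nat * 'I_n * 'I_m) := y kij.1.1 kij.1.2 kij.2.
(* Block [k] holds the observations of pass [k]; passes from [K] on get an
   empty block, independence being assumed only for the first [K] passes. *)
pose J k := if (k < K)%N then [seq (k, i, j) | j <- enum 'I_m] else [::].
have memJ k x : x \in J k -> x.1.1 = k /\ (k < K)%N.
  by rewrite /J; case: ifP => // kK /mapP[j _ ->].
have J_uniq k : uniq (J k).
  rewrite /J; case: ifP => // _.
  by rewrite map_inj_uniq ?enum_uniq // => ? ? [].
have J_sub k x : x \in J k -> (x.1.1 < K)%N by move=> /memJ[->].
have J_disj k k' x : k != k' -> x \in J k -> x \notin J k'.
  move=> kk' /memJ[xk _]; apply: contraNN kk' => /memJ[xk' _].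
  by rewrite -xk xk'.
have sigma_pass k : k \in iota 0 K ->
    <<s box_system X (J k) >> [set w | (gamma < T k i w)%R].
  rewrite mem_iota add0n => /andP[_ kK].
  apply: (@measurable_gtr_set _ (g_sigma_algebraType (box_system X (J k)))).
  apply: measurable_llr_sum => // j.
  have kij_J : (k, i, j) \in J k.
    by rewrite /J kK; apply: map_f; rewrite mem_enum.
  exact: (measurable_fun_box_system X _ _ kij_J).
rewrite (independent_blocks _ _ X (fun x => my x.1.1 x.1.2 x.2) y_indep _ J_uniq
  J_sub J_disj _ _ (iota_uniq 0 K) sigma_pass).
rewrite -[in X in (_ <= (_ ^+ X)%:E)%E](size_iota 0 K).
apply: prode_le_exprn => [|k]; first by rewrite invr_ge0.
rewrite mem_iota add0n => /andP[_ kK].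
by rewrite measure_ge0 /=; exact: null_pass_le_half.
Qed.

Lemma error_probability_le :
  (P [set w | seq_thresh (fun k i => T k i w) gamma K != S] <=
   P [set w | exists k, (k < K)%N /\
     exists2 i, i \in S & (T k i w <= gamma)%R] +
   (n%:R * (2^-1) ^+ K)%:E)%E.
Proof.
set E1 := [set w | exists k, _].
pose survive i := \big[setI/setT]_(k <- iota 0 K) [set w | (gamma < T k i w)%R].
pose E2 := \big[setU/set0]_(i <- enum 'I_n | i \notin S) survive i.
have mE1 : measurable E1.
  suff -> : E1 = \bigcup_(k in `I_K) \bigcup_(i in [set i | i \in S])
      [set w | (T k i w <= gamma)%R].
    apply: bigcup_measurable => k _; apply: fin_bigcup_measurable => [|i _].
      exact: finite_finset.
    exact: measurable_ler_set (measurable_T k i).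
  by apply/seteqP; split => w [k]; [move=> [kK Tk]|move=> kK Tk]; exists k.
have msurvive i : measurable (survive i).
  apply: bigsetI_measurable => k _.
  exact: measurable_gtr_set (measurable_T k i).
have -> : [set w | seq_thresh (fun k i => T k i w) gamma K != S] = E1 `|` E2.
  rewrite /E2 -bigcup_seq_cond; apply/seteqP; split => w /=.
  - move=> /seq_thresh_neqP[E1w|[i iNS Tgt]]; [by left|right].
    exists i; first by rewrite /= mem_enum iNS.
    by rewrite /survive -bigcap_seq => k /=; rewrite mem_iota => /andP[_ /Tgt].
  - case=> [E1w|[i /andP[_ iNS]]]; [|rewrite /survive -bigcap_seq => Tgt];
      apply/seq_thresh_neqP; [by left|right].
    by exists i => // k kK; apply: Tgt; rewrite /= mem_iota add0n kK.
apply: le_trans (measureU2 _ mE1 _) _.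
  by apply: bigsetU_measurable => i _; exact: msurvive.
apply: leeD => //; rewrite -[X in (X%:R * _)%R](size_enum_ord n).
apply: measure_bigsetU_le => [|i iNS]; first by rewrite exprn_ge0 // invr_ge0.
by split; [exact: msurvive|exact: null_survival_le].
Qed.

End sequential_thresholding.

Lemma natr_halfX_ceil_log2_le {R : realType} (eps : R) (n : nat) :
  0 < eps -> (1 <= n)%N ->
  n%:R * (2^-1) ^+ `|Num.ceil ((1 + eps) * (ln n%:R / ln 2))|%N <=
  expR (- (eps * ln n%:R)).
Proof.
move=> eps_gt0 n_ge1.
set K := `|Num.ceil _|%N.
have lnn_ge0 : 0 <= ln (n%:R : R) by apply: ln_ge0; rewrite ler1n.
have ln2_gt0 : 0 < ln (2 : R) by apply: ln_gt0; lra.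
have n_gt0 : (0 : R) < n%:R by rewrite ltr0n.
have K_ge : (1 + eps) * ln (n%:R : R) <= K%:R * ln 2.
  set x := (1 + eps) * (ln (n%:R : R) / ln 2).
  have x_ge0 : 0 <= x by rewrite mulr_ge0 ?divr_ge0 //; [lra|exact: ltW].
  have ceil_ge0 : 0 <= Num.ceil x by rewrite ceil_ge0; lra.
  have : x <= K%:R by rewrite /K natr_absz ger0_norm // ceil_ge.
  by move=> /(ler_wpM2r (ltW ln2_gt0)); rewrite /x -mulrA divfK ?gt_eqF.
have halfXE : (2^-1 : R) ^+ K = expR (- (K%:R * ln 2)).
  by rewrite exprVn expRN mulr_natl -lnXn // lnK // posrE exprn_gt0.
rewrite halfXE -[X in X * _]lnK ?posrE // -expRD ler_expR.
by move: K_ge; rewrite mulrDl mul1r lerBlDr addrC -lerBrDl addrC.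
Qed.

Lemma cvg_natr_halfX_ceil_log2 {R : realType} (eps : R) : 0 < eps ->
  (fun n => n%:R * (2^-1) ^+ `|Num.ceil ((1 + eps) * (ln n%:R / ln 2))|%N)
    @ \oo --> (0 : R).
Proof.
move=> eps_gt0.
have eps_ln_cvgy : (fun n => eps * ln (n%:R : R)) @ \oo --> +oo.
  apply/cvgryPge => A; near=> n.
  have n_gt : expR (eps^-1 * A) < n%:R by near: n; exact: nbhs_infty_gtr.
  have n_gt0 : (0 : R) < n%:R := lt_trans (expR_gt0 _) n_gt.
  by rewrite -ler_pdivrMl // -ler_expR lnK ?posrE // ltW.
apply: (@squeeze_cvgr _ _ _ _ (fun=> 0) (fun n => expR (- (eps * ln n%:R))));
  last 2 first.
- exact: cvg_cst.
- apply: (cvg_comp (fun n => eps * ln n%:R) (fun x => expR (- x)) eps_ln_cvgy).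
  exact: cvgr_expR.
near=> n; rewrite mulr_ge0 ?exprn_ge0 ?invr_ge0 //=.
apply: natr_halfX_ceil_log2_le => //.
by near: n; exact: nbhs_infty_gt.
Unshelve. all: end_near. Qed.

Theorem theorem2 (R : realType) (f : R -> R -> R) (m : nat)
  (theta0 theta1 : nat -> R) (S : forall n : nat, {set 'I_n})
  (K : nat -> nat) (eps : R) (gamma0 : nat -> R)
  (d : nat -> measure_display) (Omega : forall n, measurableType (d n))
  (P : forall n, probability (Omega n) R)
  (y : forall n, nat -> 'I_n -> 'I_m -> Omega n -> R) :
  density_family f ->
  (1 <= m)%N ->
  (forall n, theta0 n != theta1 n) ->
  0 < eps ->
  (forall n, K n = `|Num.ceil ((1 + eps) * (ln n%:R / ln 2))|%N) ->
  (forall n, is_median_llr f (theta0 n) (theta1 n) m (gamma0 n)) ->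
  (forall n k i j, measurable_fun setT (y n k i j)) ->
  (forall n, mutually_independent (P n)
     [set kij : nat * 'I_n * 'I_m | (kij.1.1 < K n)%N]
     (fun kij => y n kij.1.1 kij.1.2 kij.2)) ->
  (forall n k i j, (k < K n)%N ->
     has_density (P n) (y n k i j)
       (f (if i \in S n then theta1 n else theta0 n))) ->
  let T n k i w := \sum_(j < m) llr f (theta0 n) (theta1 n) (y n k i j w) in
  (fun n => P n [set w | exists k, (k < K n)%N /\
       exists2 i, i \in S n & T n k i w <= gamma0 n]) @ \oo --> 0%E ->
  (fun n => P n [set w | seq_thresh (fun k i => T n k i w) (gamma0 n) (K n)
                          != S n]) @ \oo --> 0%E.
Proof.
move=> f_density _ _ eps_gt0 K_def gamma_median my y_indep y_density T
  signal_drop_cvg0.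
apply: (@squeeze_cvge _ _ _ R (fun=> 0%E) _ (fun n =>
  P n [set w | exists k, (k < K n)%N /\
    exists2 i, i \in S n & (T n k i w <= gamma0 n)%R] +
  (n%:R * (2^-1) ^+ K n)%:E)%E).
- apply: nearW => n; rewrite measure_ge0 /=.
  exact: (error_probability_le _ _ _ _ _ _ _ _ (P n) (y n) f_density
    (gamma_median n) (my n) (y_indep n) (y_density n)).
- exact: cvg_cst.
- rewrite -[0%E]adde0; apply: cvgeD => //.
  apply/fine_cvgP; split; first exact: nearW.
  under eq_fun do rewrite K_def.
  exact: cvg_natr_halfX_ceil_log2.
Qed.
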